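(* Let $n\ge 2$, let $(E,q)$, $E_{\mathbb R}$, the orientation of $E_{\mathbb R}$ and the isotropic map $s\colon\mathbb C^n\to E$ with $s(z)\neq 0$ for $z\neq 0$ be as in the context, and write $s=s_++is_-$ with $s_\pm\colon\mathbb C^n\to E_{\mathbb R}$. Then $$\sqrt e\,(E,s)\;=\;\deg\Big(S^{2n-1}\to S(E_{\mathbb R}),\ z\mapsto \tfrac{s_-(z)}{|s_-(z)|}\Big).$$
   Context: Fix $n\ge2$ and a complex vector space $E$ of dimension $2n$ with a nondegenerate symmetric complex bilinear form $q$. The $n$-dimensional isotropic (maximal isotropic) subspaces of $E$ form two connected components; one is fixed (this is the choice of complex orientation) and its members are called positive, the others negative. Fix a real subspace $E_{\mathbb R}\subset E$ with $E=E_{\mathbb R}\oplus iE_{\mathbb R}$ on which $q$ is real and positive definite, with inner product $\langle\cdot,\cdot\rangle=q|_{E_{\mathbb R}}$. For an orthogonal complex structure $J$ on $E_{\mathbb R}$, $\Lambda_J=\{a-iJa: a\in E_{\mathbb R}\}$ is maximal isotropic; orient $E_{\mathbb R}$ so that $\Lambda_J$ is positive whenever $J$ is compatible with this orientation. Let $s\colon\mathbb C^n\to E$ be continuous with $q(s(z),s(z))=0$ for all $z$ and $s(z)\ne0$ for $z\ne0$. Writing $s=s_++is_-$ with $s_\pm$ valued in $E_{\mathbb R}$, isotropy means $|s_+|=|s_-|$ and $\langle s_+,s_-\rangle=0$, so $s_\pm(z)\neq0$ for $z\ne0$. Orient the unit sphere $S^{2n-1}\subset\mathbb C^n$ as the boundary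 of the unit ball with the complex orientation, and the unit sphere $S(E_{\mathbb R})$ as the boundary of the unit ball of $E_{\mathbb R}$. The orthogonal Hopf index is $\sqrt e\,(E,s):=\deg\big(S^{2n-1}\to S(E_{\mathbb R}),\ z\mapsto s_+(z)/|s_+(z)|\big)\in\mathbb Z$ (for holomorphic $s$ this equals the cosection-localised square root Euler class of Oh–Thomas at the zero $0$). *)

From mathcomp Require Import all_boot all_order all_algebra.
From mathcomp Require Import all_classical all_reals all_analysis.
Set Implicit Arguments. Unset Strict Implicit. Unset Printing Implicit Defensive.
Import Order.TTheory GRing.Theory Num.Theory.
Import numFieldNormedType.Exports.
Local Open Scope classical_set_scope.
Local Open Scope ring_scope.

Definition dotv (R : realType) (N : nat) (u v : 'rV[R]_N) : R :=
  \sum_(i < N) u 0 i * v 0 i.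

Definition enorm (R : realType) (N : nat) (u : 'rV[R]_N) : R :=
  Num.sqrt (dotv u u).

Definition usphere (R : realType) (N : nat) : set 'rV[R]_N :=
  [set x | enorm x = 1].

Definition normalize (R : realType) (N : nat) (v : 'rV[R]_N) : 'rV[R]_N :=
  (enorm v)^-1 *: v.

Definition sphere_homotopic (R : realType) (N : nat)
    (f g : 'rV[R]_N -> 'rV[R]_N) : Prop :=
  exists H : R * 'rV[R]_N -> 'rV[R]_N,
    {within [set t : R | 0 <= t <= 1] `*` @usphere R N, continuous H} /\
    (forall t x, 0 <= t <= 1 -> usphere x -> usphere (H (t, x))) /\
    (forall x, usphere x -> H (0, x) = f x) /\
    (forall x, usphere x -> H (1, x) = g x).

Definition C1 (R : realType) (N : nat) (g : 'rV[R]_N -> 'rV[R]_N) : Prop :=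
  (forall x, differentiable g x) /\ (forall v, continuous (fun x => 'd g x v)).

(* For x on the sphere with image y = g x on the sphere, the linear map
   L_x : R^N -> R^N sending x to y and acting by dg_x on T_x S = x^perp
   (row-vector convention v |-> v *m L_x).  With both spheres oriented as
   boundaries of the unit ball (outward normal first), sign(det L_x) is the
   local orientation sign of g at x (w.r.t. the standard orientation). *)
Definition local_mx (R : realType) (N : nat) (g : 'rV[R]_N -> 'rV[R]_N)
    (x : 'rV[R]_N) : 'M[R]_N :=
  \matrix_(i < N, j < N)
    (('d g x (delta_mx 0 i - x 0 i *: x) + x 0 i *: g x) 0 j).

(* Brouwer degree relation of f : S^{N-1} -> S^{N-1}, where the source has the
   standard orientation of R^N and the target R^N is oriented by the ordered
   basis given by the rows of the invertible matrix B: f is homotopic to a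
   C^1 map g having a regular value y whose signed preimage count is d. *)
Definition degree_rel (R : realType) (N : nat) (B : 'M[R]_N)
    (f : 'rV[R]_N -> 'rV[R]_N) (d : int) : Prop :=
  exists (g : 'rV[R]_N -> 'rV[R]_N) (y : 'rV[R]_N) (xs : seq 'rV[R]_N),
    [/\ C1 g, (forall x, usphere x -> usphere (g x)),
        sphere_homotopic f g, usphere y & uniq xs] /\
    [/\ (forall x, x \in xs <-> (usphere x /\ g x = y)),
        (forall x, x \in xs -> \det (local_mx g x) != 0) &
        d = sgz (\det B) * \sum_(x <- xs) sgz (\det (local_mx g x))].

Definition degree (R : realType) (N : nat) (B : 'M[R]_N)
    (f : 'rV[R]_N -> 'rV[R]_N) : int :=
  xget 0%R [set d | degree_rel B f d].

(* The complex space E = E_R (+) i E_R, with E_R = R^(2n) (orthonormal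
   coordinates for <,> = q|E_R); an element u + i v is the pair (u, v).
   C^n is realified as R^(2n) with coordinates (Re z1, Im z1, ..., Re zn, Im zn),
   whose standard orientation is the complex orientation. *)
Definition Espace (R : realType) (n : nat) := ('rV[R]_(n.*2) * 'rV[R]_(n.*2))%type.

(* The complex bilinear form q, value given as (real part, imaginary part):
   q(a + i b, c + i d) = (<a,c> - <b,d>) + i (<a,d> + <b,c>). *)
Definition qform (R : realType) (n : nat) (e1 e2 : Espace R n) : R * R :=
  (dotv e1.1 e2.1 - dotv e1.2 e2.2, dotv e1.1 e2.2 + dotv e1.2 e2.1).

Definition sqrt_e (R : realType) (n : nat) (B : 'M[R]_(n.*2))
    (s : 'rV[R]_(n.*2) -> Espace R n) : int :=
  degree B (fun z => normalize (s z).1).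

(* Isotropy of s = s_+ + i s_- says exactly that s_+ and s_- are orthogonal of
   equal length, so on the sphere a = s_+/|s_+| and b = s_-/|s_-| are pointwise
   orthonormal.  Turning a(z) by a quarter turn in the plane spanned by a(z), b(z)
   carries it to b(z) and is the identity on the orthogonal complement; applying
   this rotation to any homotopy from a to a C^1 map g yields a homotopy from b
   to the same g, so a and b satisfy the same degree relation. *)
From mathcomp Require Import all_boot all_order all_algebra.
From mathcomp Require Import all_classical all_reals all_analysis.
From mathcomp Require Import ring lra.
Set Implicit Arguments. Unset Strict Implicit. Unset Printing Implicit Defensive.
Import Order.TTheory GRing.Theory Num.Theory.
Import numFieldNormedType.Exports.
Local Open Scope classical_set_scope.
Local Open Scope ring_scope.

Section EuclideanSpace.
Variables (R : realType) (N : nat).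
Implicit Types (u v w a b : 'rV[R]_N).

Lemma dotvC u v : dotv u v = dotv v u.
Proof. by apply: eq_bigr => i _; rewrite mulrC. Qed.

Lemma dotvDl u v w : dotv (u + v) w = dotv u w + dotv v w.
Proof. by rewrite /dotv -big_split; apply: eq_bigr => i _; rewrite !mxE mulrDl. Qed.

Lemma dotvZl k u v : dotv (k *: u) v = k * dotv u v.
Proof. by rewrite /dotv mulr_sumr; apply: eq_bigr => i _; rewrite !mxE mulrA. Qed.

Lemma dotvNl u v : dotv (- u) v = - dotv u v.
Proof. by rewrite -scaleN1r dotvZl mulN1r. Qed.

Lemma dotvDr u v w : dotv w (u + v) = dotv w u + dotv w v.
Proof. by rewrite dotvC dotvDl !(dotvC w). Qed.

Lemma dotvZr k u v : dotv v (k *: u) = k * dotv v u.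
Proof. by rewrite dotvC dotvZl dotvC. Qed.

Lemma dotvNr u v : dotv v (- u) = - dotv v u.
Proof. by rewrite dotvC dotvNl dotvC. Qed.

Lemma dotv_ge0 u : 0 <= dotv u u.
Proof. by apply: sumr_ge0 => i _; rewrite -expr2 sqr_ge0. Qed.

Lemma dotv_eq0 u : (dotv u u == 0) = (u == 0).
Proof.
apply/idP/eqP => [|->]; last by rewrite /dotv big1 // => i _; rewrite mxE mul0r.
rewrite psumr_eq0 => [/allP u0|i _]; last by rewrite -expr2 sqr_ge0.
by apply/rowP => i; have := u0 i (mem_index_enum i); rewrite -expr2 sqrf_eq0 mxE => /eqP.
Qed.

Lemma dotv_gt0 u : u != 0 -> 0 < dotv u u.
Proof. by move=> u0; rewrite lt_neqAle dotv_ge0 andbT eq_sym dotv_eq0. Qed.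

Lemma usphere_dotv u : usphere u <-> dotv u u = 1.
Proof.
rewrite /usphere /= /enorm; split => [u1|->]; last exact: sqrtr1.
by rewrite -(sqr_sqrtr (dotv_ge0 u)) u1 expr1n.
Qed.

Lemma usphere_neq0 u : usphere u -> u != 0.
Proof. by move=> /usphere_dotv u1; rewrite -dotv_eq0 u1 oner_eq0. Qed.

Definition orthonormal_pair a b := [/\ dotv a a = 1, dotv b b = 1 & dotv a b = 0].

Lemma orthonormal_pairC a b : orthonormal_pair a b -> orthonormal_pair b a.
Proof. by case=> aa bb ab; split; rewrite // dotvC. Qed.

Lemma dotv_normalize u v :
  dotv (normalize u) (normalize v) = (enorm u * enorm v)^-1 * dotv u v.
Proof. by rewrite /normalize dotvZl dotvZr mulrA invfM mulrC. Qed.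

Lemma normalize_orthonormal_pair u v : u != 0 -> v != 0 -> dotv u v = 0 ->
  orthonormal_pair (normalize u) (normalize v).
Proof.
have normalize_unit w : w != 0 -> dotv (normalize w) (normalize w) = 1.
  move=> w0; rewrite dotv_normalize /enorm -expr2 sqr_sqrtr ?dotv_ge0 //.
  by rewrite mulVf // lt0r_neq0 // dotv_gt0.
by move=> u0 v0 uv; split; rewrite ?normalize_unit // dotv_normalize uv mulr0.
Qed.

Lemma cvg_dotv (T : Type) (F : set_system T) {FF : Filter F}
    (f g : T -> 'rV[R]_N) u v :
  f @ F --> u -> g @ F --> v -> dotv (f x) (g x) @[x --> F] --> dotv u v.
Proof.
move=> fu gv; apply: cvg_big => [x|i _].
  by apply: cvgD; [exact: cvg_fst | exact: cvg_snd].
have coord0i : continuous (fun M : 'rV[R]_N => M 0 i) by exact: coord_continuous.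
by apply: cvgM; [exact: (continuous_cvg _ (coord0i _) fu)
                | exact: (continuous_cvg _ (coord0i _) gv)].
Qed.

Lemma normalize_continuous u : u != 0 -> {for u, continuous (@normalize R N)}.
Proof.
move=> u0; have enorm_u : enorm v @[v --> u] --> enorm u.
  have dotv_u : dotv v v @[v --> u] --> dotv u u.
    by apply: (@cvg_dotv _ _ _ id id); [exact: nbhs_filter | exact: cvg_id ..].
  exact: (continuous_cvg _ (@sqrt_continuous R _) dotv_u).
have enorm_u_neq0 : enorm u != 0 by rewrite sqrtr_eq0 -ltNge dotv_gt0.
exact: cvgZ (cvgV enorm_u_neq0 enorm_u) cvg_id.
Qed.

(* [(rcos t, rsin t)] is the rational parametrisation of the unit circle; it runs
   through the first quadrant from (0, 1) at t = 0 to (1, 0) at t = 1. *)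
Definition rcos (t : R) := 2 * t / (1 + t ^+ 2).
Definition rsin (t : R) := (1 - t ^+ 2) / (1 + t ^+ 2).

Lemma rcos_rsin_den_neq0 (t : R) : 1 + t ^+ 2 != 0.
Proof. by rewrite lt0r_neq0 // ltr_pwDl // sqr_ge0. Qed.

(* The rotation of the plane spanned by the orthonormal pair (a, b) with
   cosine [rcos t] and sine [rsin t], extended by the identity on its
   orthogonal complement. *)
Definition plane_rot (t : R) a b w :=
  w + (rcos t - 1) *: (dotv w a *: a + dotv w b *: b)
    + rsin t *: (dotv w a *: b - dotv w b *: a).

Lemma dotv_plane_rot t a b w : orthonormal_pair a b ->
  dotv (plane_rot t a b w) (plane_rot t a b w) = dotv w w.
Proof.
case=> aa bb ab; rewrite /plane_rot.
rewrite !(dotvDl, dotvDr, dotvZl, dotvZr, dotvNl, dotvNr).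
rewrite !(dotvC a w) !(dotvC b w) (dotvC b a) aa bb ab /rcos /rsin.
by have den_neq0 := rcos_rsin_den_neq0 t; field.
Qed.

Lemma plane_rot0 a b : orthonormal_pair a b -> plane_rot 0 a b a = b.
Proof.
case=> aa _ ab; rewrite /plane_rot /rcos /rsin aa ab expr0n /= addr0 subr0.
by rewrite mulr0 mul0r divr1 sub0r !scale0r subr0 addr0 !scale1r scaleN1r subrr add0r.
Qed.

Lemma plane_rot1 a b w : plane_rot 1 a b w = w.
Proof.
rewrite /plane_rot /rcos /rsin expr1n subrr mul0r scale0r addr0 mulr1.
by rewrite divff ?rcos_rsin_den_neq0 // subrr scale0r addr0.
Qed.

Lemma cvg_plane_rot (T : Type) (F : set_system T) {FF : Filter F}
    (t_ : T -> R) (a_ b_ w_ : T -> 'rV[R]_N) t a b w :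
  t_ @ F --> t -> a_ @ F --> a -> b_ @ F --> b -> w_ @ F --> w ->
  plane_rot (t_ x) (a_ x) (b_ x) (w_ x) @[x --> F] --> plane_rot t a b w.
Proof.
move=> tt aa bb ww.
have sq_t : t_ x ^+ 2 @[x --> F] --> t ^+ 2.
  by rewrite expr2; under eq_cvg do rewrite expr2; exact: cvgM.
have inv_den : (1 + t_ x ^+ 2)^-1 @[x --> F] --> (1 + t ^+ 2)^-1.
  by apply: cvgV (rcos_rsin_den_neq0 t) _; apply: cvgD => //; exact: cvg_cst.
have rcos_t : rcos (t_ x) @[x --> F] --> rcos t.
  by apply: cvgM => //; apply: cvgM => //; exact: cvg_cst.
have rsin_t : rsin (t_ x) @[x --> F] --> rsin t.
  by apply: cvgM => //; apply: cvgB => //; exact: cvg_cst.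
have wa : dotv (w_ x) (a_ x) @[x --> F] --> dotv w a by exact: cvg_dotv.
have wb : dotv (w_ x) (b_ x) @[x --> F] --> dotv w b by exact: cvg_dotv.
apply: cvgD; first apply: cvgD => //.
  by apply: cvgZ; [apply: cvgB => //; exact: cvg_cst | apply: cvgD; exact: cvgZ].
by apply: cvgZ => //; apply: cvgB; exact: cvgZ.
Qed.

End EuclideanSpace.

Lemma sphere_homotopic_rotate (R : realType) (N : nat) (a b g : 'rV[R]_N -> 'rV[R]_N) :
  (forall x, usphere x -> {for x, continuous a}) ->
  (forall x, usphere x -> {for x, continuous b}) ->
  (forall x, usphere x -> orthonormal_pair (a x) (b x)) ->
  sphere_homotopic a g -> sphere_homotopic b g.
Proof.
move=> a_cont b_cont ab_on [H [H_cont [H_sphere [H0 H1]]]].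
exists (fun p => plane_rot p.1 (a p.2) (b p.2) (H p)); split; [|split; [|split]].
- apply/subspace_continuousP => -[t x] tx; have [_ /= x_sphere] := tx.
  set A := [set t : R | 0 <= t <= 1] `*` @usphere R N.
  have at_x (f : 'rV[R]_N -> 'rV[R]_N) : {for x, continuous f} ->
      (fun p : R * 'rV[R]_N => f p.2) @ within A (nbhs (t, x)) --> f x.
    move=> f_x; apply: cvg_within_filter.
    by apply: (@continuous_cvg _ _ _ _ _ snd f _ f_x); exact: cvg_snd.
  apply: cvg_plane_rot ((subspace_continuousP _ _).1 H_cont _ tx).
  + by apply: cvg_within_filter; exact: cvg_fst.
  + exact: at_x (a_cont _ x_sphere).
  + exact: at_x (b_cont _ x_sphere).
- move=> t x t01 x_sphere; have /usphere_dotv Htx := H_sphere _ _ t01 x_sphere.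
  by apply/usphere_dotv; rewrite dotv_plane_rot //; exact: ab_on.
- by move=> x x_sphere; rewrite /= H0 // plane_rot0 //; exact: ab_on.
- by move=> x x_sphere; rewrite /= plane_rot1 H1.
Qed.

Lemma degree_rel_orthonormal (R : realType) (N : nat) (B : 'M[R]_N)
    (a b : 'rV[R]_N -> 'rV[R]_N) d :
  (forall x, usphere x -> {for x, continuous a}) ->
  (forall x, usphere x -> {for x, continuous b}) ->
  (forall x, usphere x -> orthonormal_pair (a x) (b x)) ->
  degree_rel B a d -> degree_rel B b d.
Proof.
move=> a_cont b_cont ab_on [g [y [xs [[g_C1 g_sphere ag y_sphere xs_uniq] g_y]]]].
exists g, y, xs; split=> //; split=> //.
exact: sphere_homotopic_rotate ag.
Qed.

Lemma degree_orthonormal (R : realType) (N : nat) (B : 'M[R]_N)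
    (a b : 'rV[R]_N -> 'rV[R]_N) :
  (forall x, usphere x -> {for x, continuous a}) ->
  (forall x, usphere x -> {for x, continuous b}) ->
  (forall x, usphere x -> orthonormal_pair (a x) (b x)) ->
  degree B a = degree B b.
Proof.
move=> a_cont b_cont ab_on.
have ba_on x : usphere x -> orthonormal_pair (b x) (a x).
  by move=> /ab_on; exact: orthonormal_pairC.
congr (xget 0 _); apply/funext => d; apply/propext.
by split; apply: degree_rel_orthonormal.
Qed.

Section Isotropic.
Variables (R : realType) (n : nat) (e : Espace R n).
Hypothesis e_iso : qform e e = (0, 0).

Lemma isotropic_dotv : dotv e.1 e.1 = dotv e.2 e.2 /\ dotv e.1 e.2 = 0.
Proof.
case: e_iso => re im; split; first by apply/eqP; rewrite -subr_eq0 re.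
by move: im; rewrite (dotvC e.2); lra.
Qed.

Lemma isotropic_neq0 : e != (0, 0) -> e.1 != 0 /\ e.2 != 0.
Proof.
have [same_len _] := isotropic_dotv.
have e12 : (e.1 == 0) = (e.2 == 0) by rewrite -!dotv_eq0 same_len.
by case: e e12 => u v /= e12; rewrite xpair_eqE e12 andbb => v0; rewrite v0.
Qed.

End Isotropic.

Theorem mainTheorem1 (R : realType) (n : nat) (B : 'M[R]_(n.*2))
    (s : 'rV[R]_(n.*2) -> Espace R n) :
  (2 <= n)%N ->
  \det B != 0 ->
  continuous s ->
  (forall z, qform (s z) (s z) = (0, 0)) ->
  (forall z, z != 0 -> s z != (0, 0)) ->
  sqrt_e B s = degree B (fun z => normalize (s z).2).
Proof.
move=> _ _ s_cont s_iso s_neq0.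
have s_pm_neq0 z : usphere z -> (s z).1 != 0 /\ (s z).2 != 0.
  by move=> /usphere_neq0 /s_neq0; exact: isotropic_neq0.
apply: degree_orthonormal => [z /s_pm_neq0[s1 _]|z /s_pm_neq0[_ s2]|z /s_pm_neq0[s1 s2]].
- exact: continuous_comp (continuous_comp (s_cont z) cvg_fst) (normalize_continuous s1).
- exact: continuous_comp (continuous_comp (s_cont z) cvg_snd) (normalize_continuous s2).
- exact: normalize_orthonormal_pair s1 s2 (isotropic_dotv (s_iso z)).2.
Qed.
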